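(* Assume $n_1\equiv\pm1\pmod 8$ and $n_2\equiv\pm1\pmod 8$. Then $-1\in D_1$ if and only if $n_2\equiv -1\pmod 8$.
   Context: Let $n_1,n_2$ be distinct odd primes, $n=n_1n_2$, $d=\gcd(n_1-1,n_2-1)$ and $e=(n_1-1)(n_2-1)/d$. Let $g_1,g_2$ be primitive roots modulo $n_1,n_2$ respectively, let $g$ be the integer modulo $n$ with $g\equiv g_1 \pmod{n_1}$, $g\equiv g_2\pmod{n_2}$, and let $\nu$ be the integer modulo $n$ with $\nu\equiv g\pmod{n_1}$, $\nu\equiv 1\pmod{n_2}$. It is known that every element of $\mathbb{Z}_n^*$ can be written uniquely as $g^s\nu^i$ with $0\le s\le e-1$, $0\le i\le d-1$. Define $D_1=\{g^{2s+1}\nu^i: 0\le s\le (e-2)/2,\ 0\le i\le d-1\}$. *)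

From mathcomp Require Import all_boot.
Set Implicit Arguments. Unset Strict Implicit. Unset Printing Implicit Defensive.

Definition prim_root_mod (p g : nat) : Prop :=
  g ^ (p.-1) = 1 %[mod p] /\ (forall k, 0 < k < p.-1 -> g ^ k <> 1 %[mod p]).

Definition inD1 (n1 n2 g nu x : nat) : Prop :=
  let n := n1 * n2 in
  let d := gcdn n1.-1 n2.-1 in
  let e := (n1.-1 * n2.-1) %/ d in
  exists s i, s <= (e - 2) %/ 2 /\ i <= d - 1 /\
    g ^ (2 * s + 1) * nu ^ i = x %[mod n].

(* Whether -1 lies in D_1 only
   depends on n2 modulo 4: -1 is in D_1 iff n2 = 3 (mod 4).  Under the
   hypothesis n2 = +-1 (mod 8) this is the same as n2 = 7 (mod 8).

   Write an element of D_1 as g^k nu^i with k = 2s+1 odd and i < d.  Modulo n2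
   it is g2^k, modulo n1 it is g1^(k+i).  Since g2^((n2-1)/2) = -1 (mod n2) and
   g2 has order n2-1, the congruence g^k nu^i = -1 (mod n2) forces
   k = (n2-1)/2 (mod n2-1); when 4 | n2-1 this contradicts the oddness of k.
   Conversely, when n2-1 = 2 (mod 4), a Bezout argument produces an odd
   k < e = lcm(n1-1, n2-1) and i < d = gcd(n1-1, n2-1) with
   k = (n2-1)/2 (mod n2-1) and k + i = (n1-1)/2 (mod n1-1), and the Chinese
   remainder theorem turns these into g^k nu^i = -1 (mod n). *)
From mathcomp Require Import all_boot zify.
Set Implicit Arguments. Unset Strict Implicit.

Lemma congr_modM p x y x' y' :
  x = x' %[mod p] -> y = y' %[mod p] -> x * y = x' * y' %[mod p].
Proof. by move=> Ex Ey; rewrite -modnMm Ex Ey modnMm. Qed.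

Lemma congr_modX p x y k : x = y %[mod p] -> x ^ k = y ^ k %[mod p].
Proof. by move=> E; rewrite -modnXm E modnXm. Qed.

(* m n - 1 represents -1 modulo m. *)
Lemma mul_pred_mod m n : 0 < m -> 0 < n -> m * n - 1 = m.-1 %[mod m].
Proof.
move=> m_gt0 n_gt0; have -> : m * n - 1 = m * n.-1 + m.-1.
  by case: n n_gt0 => // k _; case: m m_gt0 => // j _; rewrite mulnS /=; lia.
by rewrite mulnC modnMDl.
Qed.

Lemma expn_mod_period p g N a :
  g ^ N = 1 %[mod p] -> g ^ a = g ^ (a %% N) %[mod p].
Proof.
move=> gN; rewrite {1}(divn_eq a N) expnD [_ %/ N * N]mulnC expnM.
have gNq : (g ^ N) ^ (a %/ N) = 1 %[mod p].
  by rewrite (congr_modX _ gN) exp1n.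
by rewrite -modnMml gNq modnMml mul1n.
Qed.

Lemma expn_congr_period p g N a b :
  g ^ N = 1 %[mod p] -> a = b %[mod N] -> g ^ a = g ^ b %[mod p].
Proof.
by move=> gN Eab; rewrite (expn_mod_period _ gN) Eab -(expn_mod_period _ gN).
Qed.

Lemma prime_pred_gt0 p : prime p -> 0 < p.-1.
Proof. by move=> /prime_gt1; rewrite -subn1 subn_gt0. Qed.

Section PrimitiveRoot.
Variables p g : nat.
Hypotheses (p_prime : prime p) (g_prim : prim_root_mod p g).

Let p_gt1 : 1 < p := prime_gt1 p_prime.
Let pred_p_gt0 : 0 < p.-1 := prime_pred_gt0 p_prime.

Lemma prim_root_ndvd : ~~ (p %| g).
Proof.
case: g_prim => gp _; apply/negP => /dvdnP [k def_g].
move: gp; rewrite def_g expnMn -(prednK pred_p_gt0) !expnS.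
by rewrite mulnCA modnMr modn_small.
Qed.

Let g_gt0 : 0 < g.
Proof. by move: prim_root_ndvd; case: (g) => //; rewrite dvdn0. Qed.

Lemma prim_root_exp_inj_small a b :
  a <= b < p.-1 -> g ^ a = g ^ b %[mod p] -> a = b.
Proof.
case/andP=> le_ab lt_b E; have [_ g_ord] := g_prim.
move: E; rewrite -(subnKC le_ab) expnD; set c := b - a => E.
have gc_gt0 : 0 < g ^ c by rewrite expn_gt0 g_gt0.
have gc1 : g ^ c = 1 %[mod p].
  move/eqP: E; rewrite eq_sym eqn_mod_dvd; last by rewrite leq_pmulr.
  rewrite -{2}(muln1 (g ^ a)) -mulnBr Euclid_dvdM // Euclid_dvdX //.
  by rewrite (negbTE prim_root_ndvd) /= -eqn_mod_dvd // => /eqP.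
case: (posnP c) => [c0 | c_gt0]; first by rewrite c0 addn0.
have lt_c : c < p.-1 by apply: leq_ltn_trans (leq_subr _ _) lt_b.
by case: (g_ord c); rewrite ?c_gt0.
Qed.

Lemma prim_root_exp_inj a b : g ^ a = g ^ b %[mod p] -> a = b %[mod p.-1].
Proof.
have [gp _] := g_prim.
rewrite (expn_mod_period a gp) (expn_mod_period b gp) => E.
have lt_a : a %% p.-1 < p.-1 by rewrite ltn_mod.
have lt_b : b %% p.-1 < p.-1 by rewrite ltn_mod.
case: (leqP (a %% p.-1) (b %% p.-1)) => le_ab.
  by apply: prim_root_exp_inj_small; rewrite ?le_ab.
by symmetry; apply: prim_root_exp_inj_small; rewrite ?(ltnW le_ab).
Qed.

Lemma prim_root_half : odd p -> g ^ (p.-1./2) = p.-1 %[mod p].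
Proof.
move=> p_odd; have [gp g_ord] := g_prim.
have p_gt2 : 2 < p by lia.
have half_double : (p.-1./2).*2 = p.-1 by lia.
set x := g ^ (p.-1./2).
have x_gt0 : 0 < x by rewrite expn_gt0 g_gt0.
have x2 : x * x = 1 %[mod p] by rewrite -expnD addnn half_double.
have x_neq1 : x != 1 %[mod p] by apply/eqP; apply: g_ord; lia.
have : p %| (x - 1) * (x + 1).
  rewrite mulnBl mul1n mulnDr muln1 subnDA addnK -eqn_mod_dvd ?x2 //.
  by rewrite muln_gt0 x_gt0.
rewrite Euclid_dvdM // -eqn_mod_dvd // (negbTE x_neq1) /= => p_dvd.
apply/eqP; rewrite -(eqn_modDr 1) !addn1 prednK; last exact: ltnW.
by rewrite modnn -addn1.
Qed.

End PrimitiveRoot.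

Lemma crt_with_shift N1 N2 a b : 0 < N1 -> 0 < N2 ->
  exists t i, [/\ t < lcmn N1 N2, i < gcdn N1 N2,
                  t = a %[mod N2] & t + i = b %[mod N1]].
Proof.
move=> N1_gt0 N2_gt0; set d := gcdn N1 N2.
have d_gt0 : 0 < d by rewrite gcdn_gt0 N1_gt0.
have [u v def_uN2 _] := egcdnP N1 N2_gt0.
have uN2 : u * N2 = d %[mod N1] by rewrite def_uN2 gcdnC modnMDl.
(* c represents b - a modulo N1. *)
set c := b + N1 * a - a; set q := c %/ d; set i := c %% d.
set t := a + u * N2 * q.
exists (t %% lcmn N1 N2), i; split.
- by rewrite ltn_mod lcmn_gt0 N1_gt0.
- by rewrite ltn_mod.
- by rewrite modn_dvdm ?dvdn_lcmr // /t mulnAC addnC modnMDl.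
rewrite -modnDml modn_dvdm ?dvdn_lcml // modnDml.
have -> : t + i = u * N2 * q + (a + i) by rewrite /t; lia.
rewrite -modnDml -modnMml uN2 modnMml modnDml.
have -> : d * q + (a + i) = b + N1 * a.
  have := divn_eq c d; rewrite -/q -/i mulnC => def_c.
  have : a <= N1 * a by rewrite leq_pmull.
  rewrite /c in def_c *; lia.
by rewrite addnC mulnC modnMDl.
Qed.

Lemma odd_congr N a b : 2 %| N -> a = b %[mod N] -> odd a = odd b.
Proof.
move=> two_dvd E; have : a %% 2 = b %% 2.
  by rewrite -(modn_dvdm a two_dvd) E modn_dvdm.
by rewrite !modn2; case: (odd a); case: (odd b).
Qed.

Lemma odd_half_pred n : odd n -> odd n.-1./2 = (n %% 4 == 3).
Proof. by move=> n_odd; apply/idP/eqP; lia. Qed.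

Lemma odd_half_le t e : t < e -> odd t -> t./2 <= (e - 2) %/ 2.
Proof. lia. Qed.

Section MinusOneInD1.
Variables n1 n2 g1 g2 g nu : nat.
Hypotheses (n1_prime : prime n1) (n2_prime : prime n2).
Hypotheses (n1_odd : odd n1) (n2_odd : odd n2) (n1_neq_n2 : n1 != n2).
Hypotheses (g1_prim : prim_root_mod n1 g1) (g2_prim : prim_root_mod n2 g2).
Hypotheses (g_mod1 : g = g1 %[mod n1]) (g_mod2 : g = g2 %[mod n2]).
Hypotheses (nu_mod1 : nu = g %[mod n1]) (nu_mod2 : nu = 1 %[mod n2]).

Let n1_gt0 : 0 < n1 := prime_gt0 n1_prime.
Let n2_gt0 : 0 < n2 := prime_gt0 n2_prime.
Let n12_coprime : coprime n1 n2.
Proof. by rewrite prime_coprime // dvdn_prime2. Qed.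

Lemma D1_elem_mod_n1 k i : g ^ k * nu ^ i = g1 ^ (k + i) %[mod n1].
Proof.
rewrite expnD; apply: congr_modM; first exact: congr_modX.
by apply: congr_modX; rewrite nu_mod1.
Qed.

Lemma D1_elem_mod_n2 k i : g ^ k * nu ^ i = g2 ^ k %[mod n2].
Proof.
rewrite -(muln1 (g2 ^ k)); apply: congr_modM; first exact: congr_modX.
by rewrite -(exp1n i); apply: congr_modX.
Qed.

Lemma minus_one_inD1_iff : inD1 n1 n2 g nu (n1 * n2 - 1) <-> n2 %% 4 = 3.
Proof.
have half1 := prim_root_half n1_prime g1_prim n1_odd.
have half2 := prim_root_half n2_prime g2_prim n2_odd.
have even_pred2 : 2 %| n2.-1 by rewrite dvdn2 -oddS prednK.
split.
  case=> s [i [_ [_ E]]].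
  have E2 : g2 ^ (2 * s + 1) = g2 ^ (n2.-1./2) %[mod n2].
    rewrite -(D1_elem_mod_n2 _ i) half2.
    rewrite -(mul_pred_mod n2_gt0 n1_gt0) [n2 * n1]mulnC.
    by apply/eqP; move/eqP: E; rewrite chinese_remainder // => /andP[].
  have := odd_congr even_pred2 (prim_root_exp_inj n2_prime g2_prim E2).
  by rewrite odd_half_pred // addn1 /= mul2n odd_double => /esym/eqP.
move=> n2_mod4.
have [t [i [lt_t lt_i Et Eti]]] := crt_with_shift (n2.-1./2) (n1.-1./2)
  (prime_pred_gt0 n1_prime) (prime_pred_gt0 n2_prime).
have t_odd : odd t by rewrite (odd_congr even_pred2 Et) odd_half_pred // n2_mod4.
exists t./2, i; split; first exact: odd_half_le.
split; first by rewrite subn1 -ltnS prednK // (leq_ltn_trans _ lt_i).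
have -> : 2 * t./2 + 1 = t.
  by rewrite mul2n addn1 -[RHS]odd_double_half t_odd add1n.
have [gp1 _] := g1_prim; have [gp2 _] := g2_prim.
apply/eqP; rewrite chinese_remainder //; apply/andP; split; apply/eqP.
  by rewrite D1_elem_mod_n1 mul_pred_mod // -half1; apply: expn_congr_period gp1 Eti.
rewrite D1_elem_mod_n2 [n1 * n2]mulnC mul_pred_mod // -half2.
exact: expn_congr_period gp2 Et.
Qed.

End MinusOneInD1.

Lemma mod4_eq3_iff_mod8 n : n %% 8 = 1 \/ n %% 8 = 7 -> n %% 4 = 3 <-> n %% 8 = 7.
Proof. by move=> n_mod8; split; lia. Qed.

Theorem mainTheorem10 (n1 n2 g1 g2 g nu : nat) :
  prime n1 -> prime n2 -> odd n1 -> odd n2 -> n1 != n2 ->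
  prim_root_mod n1 g1 -> prim_root_mod n2 g2 ->
  g = g1 %[mod n1] -> g = g2 %[mod n2] ->
  nu = g %[mod n1] -> nu = 1 %[mod n2] ->
  (n1 %% 8 = 1 \/ n1 %% 8 = 7) -> (n2 %% 8 = 1 \/ n2 %% 8 = 7) ->
  (inD1 n1 n2 g nu (n1 * n2 - 1) <-> n2 %% 8 = 7).
Proof.
move=> n1_prime n2_prime n1_odd n2_odd n1_neq_n2 g1_prim g2_prim
  g_mod1 g_mod2 nu_mod1 nu_mod2 _ n2_mod8.
rewrite (minus_one_inD1_iff n1_prime n2_prime n1_odd n2_odd n1_neq_n2
  g1_prim g2_prim g_mod1 g_mod2 nu_mod1 nu_mod2).
exact: mod4_eq3_iff_mod8.
Qed.
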